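(* Let $\varepsilon>0$. Every graph $G$ on $n$ vertices has treewidth $\mathrm{tw}(G)\le 2\,b_{\varepsilon}(G)+2\varepsilon n$.
   Context: A tree decomposition of a graph $G=(V,E)$ is a pair $(\{X_i:i\in I\},T=(I,F))$ where each $X_i\subseteq V$ and $T$ is a tree, such that (a) $\bigcup_{i\in I}X_i=V$; (b) for every edge $\{v,w\}\in E$ there is $i\in I$ with $\{v,w\}\subseteq X_i$; (c) whenever $j$ lies on the path from $i$ to $k$ in $T$, $X_i\cap X_k\subseteq X_j$. Its width is $\max_{i\in I}|X_i|-1$, and the treewidth $\mathrm{tw}(G)$ is the minimum width of a tree decomposition of $G$. For a graph $G'=(V',E')$ and $U\subseteq V'$, $N(U)$ denotes the set of vertices of $V'\setminus U$ adjacent (in $G'$) to some vertex of $U$. $G'$ is an $\varepsilon$-expander if every $U\subseteq V'$ with $|U|\le |V'|/2$ satisfies $|N(U)|\ge\varepsilon|U|$. A graph $G$ is $(b,\varepsilon)$-bounded if no subgraph $G'\subseteq G$ with at least $b$ vertices is an $\varepsilon$-expander. The $\varepsilon$-boundedness $b_\varepsilon(G)$ is the minimum $b$ for which $G$ is $(b+1,\varepsilon)$-bounded. *)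

From HB Require Import structures.
From mathcomp Require Import all_boot all_order all_algebra.
Set Implicit Arguments. Unset Strict Implicit. Unset Printing Implicit Defensive.
Import Order.TTheory GRing.Theory Num.Theory.

(* A (simple) graph G = (V, e) : V a finType, e a symmetric irreflexive rel. *)

Definition is_tree (I : finType) (t : rel I) : Prop :=
  [/\ symmetric t, irreflexive t, #|I| > 0,
      (forall i k : I, connect t i k) &
      ~ (exists (x : I) (p : seq I),
           [/\ path t x p, uniq (x :: p), 2 <= size p & t (last x p) x])].

(* j lies on the path from i to k in the tree t: every t-walk from i to k
   visits j (in a tree this is exactly the unique i-k path). *)
Definition on_tree_path (I : finType) (t : rel I) (i j k : I) : Prop :=
  forall p : seq I, path t i p -> last i p = k -> j \in i :: p.

Definition tree_decomposition (V : finType) (e : rel V)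
    (I : finType) (t : rel I) (X : I -> {set V}) : Prop :=
  [/\ is_tree t,
      (forall v : V, exists i : I, v \in X i),
      (forall v w : V, e v w -> exists i : I, (v \in X i) && (w \in X i)) &
      (forall i j k : I, on_tree_path t i j k -> X i :&: X k \subset X j)].

Definition td_width (V : finType) (I : finType) (X : I -> {set V}) : int :=
  ((\max_(i : I) #|X i|)%N)%:Z - 1.

Definition is_treewidth (V : finType) (e : rel V) (k : int) : Prop :=
  (exists (I : finType) (t : rel I) (X : I -> {set V}),
      tree_decomposition e t X /\ td_width X = k) /\
  (forall (I : finType) (t : rel I) (X : I -> {set V}),
      tree_decomposition e t X -> (k <= td_width X)%R).

(* A subgraph G' = (V', E') of G = (V, e): E' is a set of (ordered) pairs,
   each an edge of G with both endpoints in V'. Adjacency in G' is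
   symmetric closure of E'. *)
Definition is_subgraph (V : finType) (e : rel V) (V' : {set V}) (E' : {set V * V}) : bool :=
  [forall p in E', [&& e p.1 p.2, p.1 \in V' & p.2 \in V']].

Definition sub_adj (V : finType) (E' : {set V * V}) (u v : V) : bool :=
  ((u, v) \in E') || ((v, u) \in E').

Definition nbhd (V : finType) (V' : {set V}) (E' : {set V * V}) (U : {set V}) : {set V} :=
  [set v in V' :\: U | [exists u in U, sub_adj E' u v]].

Definition is_expander (R : realFieldType) (V : finType)
    (V' : {set V}) (E' : {set V * V}) (eps : R) : bool :=
  [forall U : {set V}, (U \subset V') && (2 * #|U| <= #|V'|)%N ==>
     (eps * (#|U|%:R) <= (#|nbhd V' E' U|)%:R)%R].

Definition bounded (R : realFieldType) (V : finType) (e : rel V) (b : nat) (eps : R) : bool :=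
  [forall V' : {set V}, forall E' : {set V * V},
     (is_subgraph e V' E' && (b <= #|V'|)%N) ==> ~~ is_expander V' E' eps].

Lemma bounded_exists (R : realFieldType) (V : finType) (e : rel V) (eps : R) :
  exists b, bounded e b.+1 eps.
Proof.
exists #|V|; apply/forallP => V'; apply/forallP => E'; apply/implyP.
by case/andP=> _; rewrite ltnNge max_card.
Qed.

Definition b_eps (R : realFieldType) (V : finType) (e : rel V) (eps : R) : nat :=
  ex_minn (bounded_exists e eps).

From mathcomp Require Import all_boot all_order all_algebra.
From mathcomp Require Import zify lra.
Import Order.TTheory GRing.Theory Num.Theory.

Set Implicit Arguments.
Unset Strict Implicit.
Unset Printing Implicit Defensive.

(* A graph G with b := b_eps(G) is (b+1, eps)-bounded, so every vertex set A
   with |A| > b spans a subgraph that is not an eps-expander: some U in A with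
   2|U| <= |A| has fewer than eps|U| neighbours N(U) in A.  As N(U) separates
   U from W := A \ (U u N(U)), path decompositions of U and of W, with N(U)
   added to every bag, concatenate to a path decomposition of A.  By induction
   on |A| its bags have at most b + eps|A| vertices: N(U) costs eps|U|, while U
   and W each have at most |A| - |U| vertices.  A path is a tree, so
   tw(G) <= b + eps n - 1, which is stronger than the claim. *)

Definition path_rel (m : nat) : rel 'I_m :=
  fun i j => (i.+1 == j :> nat) || (j.+1 == i :> nat).
Arguments path_rel m : clear implicits.

Lemma path_rel_sym m : symmetric (path_rel m).
Proof. by move=> i j; rewrite /path_rel orbC. Qed.

Lemma path_rel_iota_walk m (i : 'I_m.+1) d : i + d < m.+1 ->
  let p := map inord (iota i.+1 d) in
  [/\ path (path_rel m.+1) i p, last i p = inord (i + d) &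
      forall j : 'I_m.+1, j \in i :: p -> i <= j <= i + d].
Proof.
elim: d i => [|d IH] i lt /=.
  split=> //; first by rewrite addn0 inord_val.
  by move=> j; rewrite inE => /eqP->; rewrite addn0 leqnn.
have lt1 : i.+1 < m.+1 by lia.
have := IH (inord i.+1); rewrite inordK // => /(_ ltac:(lia)) [walk_p last_p mem_p].
split.
- by rewrite /= walk_p andbT /path_rel inordK // eqxx.
- by rewrite /= last_p addSnnS.
- by move=> j; rewrite inE => /orP[/eqP->|/mem_p]; lia.
Qed.

Lemma path_rel_connect m (i k : 'I_m.+1) : connect (path_rel m.+1) i k.
Proof.
wlog ik : i k / i <= k.
  move=> W; case/orP: (leq_total i k) => ik; first exact: W.
  by rewrite (sym_connect_sym (@path_rel_sym m.+1)); apply: W.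
have k_lt := ltn_ord k.
have [walk_p last_p _] := @path_rel_iota_walk m i (k - i) ltac:(lia).
apply/connectP; exists (map inord (iota i.+1 (k - i))) => //.
by rewrite last_p; apply: val_inj; rewrite /= inordK; lia.
Qed.

(* On a cycle, both neighbours of a maximal vertex y are y - 1. *)
Lemma path_rel_cycle_short m (x : 'I_m) p :
  path (path_rel m) x p -> uniq (x :: p) -> path_rel m (last x p) x ->
  size p < 2.
Proof.
move=> walk_p uniq_p closed_p; rewrite ltnNge; apply/negP => size_p.
have cyc : cycle (path_rel m) (x :: p) by rewrite /= rcons_path walk_p closed_p.
have [y y_in y_max] := @arg_maxnP _ x (mem (x :: p)) val (mem_head _ _).
have [n q rot_q] := rot_to y_in.
have cyc_q : cycle (path_rel m) (y :: q) by rewrite -rot_q rot_cycle.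
have uniq_q : uniq (y :: q) by rewrite -rot_q rot_uniq.
have size_q : size q = size p by have := congr1 size rot_q; rewrite size_rot => -[].
have q_sub : {subset q <= x :: p} by move=> z zq; rewrite -(mem_rot n) rot_q inE zq orbT.
move: cyc_q uniq_q q_sub; rewrite -{}size_q in size_p; clear rot_q.
case: q size_p => [|a [|b r]] // _ /=.
rewrite rcons_path => /and3P[ya _ /andP[_ ly]] /and4P[_ a_notin _ _] q_sub.
have a_max := y_max a (q_sub a (mem_head _ _)).
have l_max := y_max (last b r) (q_sub _ (@mem_behead _ (a :: b :: r) _ (mem_last b r))).
suff a_last : a = last b r by move: a_notin; rewrite a_last mem_last.
apply: val_inj; move: ya ly a_max l_max; rewrite /path_rel /=; lia.
Qed.

Lemma path_rel_tree m : 0 < m -> is_tree (path_rel m).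
Proof.
case: m => // m _; split.
- exact: path_rel_sym.
- by move=> i; rewrite /path_rel; apply/norP; split; apply/eqP; lia.
- by rewrite card_ord.
- exact: path_rel_connect.
- by case=> x [p [walk_p uniq_p size_p closed_p]];
    move: (path_rel_cycle_short walk_p uniq_p closed_p); rewrite ltnNge size_p.
Qed.

Lemma on_tree_path_sym (I : finType) (t : rel I) (i j k : I) :
  symmetric t -> on_tree_path t i j k -> on_tree_path t k j i.
Proof.
move=> t_sym ijk p walk_p last_p.
have rev_walk : path t i (rev (belast k p)).
  rewrite -last_p rev_path (@eq_path _ _ t) // => a b; exact: t_sym.
have rev_last : last i (rev (belast k p)) = k.
  by case: p {walk_p rev_walk} last_p => [/= ->|a p _] //; rewrite /= rev_cons last_rcons.
have := ijk _ rev_walk rev_last; rewrite inE => /orP[/eqP->|].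
  by rewrite -last_p mem_last.
by rewrite mem_rev => /mem_belast.
Qed.

Lemma on_path_rel_between m (i j k : 'I_m) :
  on_tree_path (path_rel m) i j k -> minn i k <= j <= maxn i k.
Proof.
case: m i j k => [[]//|m] i j k.
wlog ik : i k / i <= k.
  move=> W; case/orP: (leq_total i k) => ik; first exact: W.
  move/(on_tree_path_sym (@path_rel_sym m.+1)) => kji.
  by rewrite minnC maxnC; apply: W kji.
move=> ijk; have k_lt := ltn_ord k.
have [walk_p last_p mem_p] := @path_rel_iota_walk m i (k - i) ltac:(lia).
have : j \in i :: map inord (iota i.+1 (k - i)).
  by apply: ijk => //; rewrite last_p; apply: val_inj; rewrite /= inordK; lia.
by move/mem_p; lia.
Qed.

Section PathDecompositions.

Variables (V : finType) (e : rel V).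

Definition interpolating (s : seq {set V}) :=
  forall i j k, i <= j -> j <= k -> k < size s ->
    nth set0 s i :&: nth set0 s k \subset nth set0 s j.

Definition covers (A : {set V}) (s : seq {set V}) :=
  forall v w, v \in A -> w \in A -> (v == w) || e v w ->
    has (fun X : {set V} => (v \in X) && (w \in X)) s.

Definition path_decomposition (A : {set V}) (s : seq {set V}) :=
  [/\ 0 < size s, all (fun X : {set V} => X \subset A) s, covers A s &
      interpolating s].

Lemma interpolating_setU (N : {set V}) s :
  interpolating s -> interpolating (map (setU N) s).
Proof.
move=> s_int i j k ij jk; rewrite size_map => ks.
by rewrite !(nth_map set0 set0); try lia; rewrite -setUIr setUS // s_int.
Qed.

Lemma interpolating_cat (s1 s2 : seq {set V}) :
  interpolating s1 -> interpolating s2 ->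
  (forall i k j, i < size s1 -> k < size s2 -> j < size s1 + size s2 ->
     nth set0 s1 i :&: nth set0 s2 k \subset nth set0 (s1 ++ s2) j) ->
  interpolating (s1 ++ s2).
Proof.
move=> s1_int s2_int cross i j k ij jk; rewrite size_cat => ks.
case: (ltnP k (size s1)) => k1.
  by rewrite !nth_cat k1 (leq_ltn_trans ij (leq_ltn_trans jk k1))
    (leq_ltn_trans jk k1); apply: s1_int.
case: (ltnP i (size s1)) => i1.
  by rewrite [nth _ _ i]nth_cat [nth _ _ k]nth_cat i1 ltnNge k1 /=; apply: cross; lia.
rewrite !nth_cat ltnNge i1 ltnNge k1 ltnNge (leq_trans i1 ij) /=.
by apply: s2_int; lia.
Qed.

Lemma covers_setU (U N : {set V}) s :
  0 < size s -> covers U s -> covers (U :|: N) (map (setU N) s).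
Proof.
move=> s_pos U_cov v w; rewrite !in_setU => vUN wUN vw.
have [X Xs [vX wX]] : exists2 X, X \in s & (v \in U -> v \in X) /\ (w \in U -> w \in X).
  case vU: (v \in U); case wU: (w \in U).
  - by case/hasP: (U_cov v w vU wU vw) => X Xs /andP[vX wX]; exists X.
  - by case/hasP: (U_cov v v vU vU ltac:(by rewrite eqxx)) => X Xs /andP[vX _]; exists X.
  - by case/hasP: (U_cov w w wU wU ltac:(by rewrite eqxx)) => X Xs /andP[wX _]; exists X.
  - by exists (nth set0 s 0); [apply: mem_nth | split].
apply/hasP; exists (N :|: X); first exact: map_f.
by rewrite !in_setU; case/orP: vUN => [/vX|]-> ; case/orP: wUN => [/wX|]->; rewrite ?orbT.
Qed.

Lemma path_decomposition1 (A : {set V}) : path_decomposition A [:: A].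
Proof.
split=> //=; first by rewrite subxx.
  by move=> v w vA wA _; rewrite /= vA wA.
move=> i j k ij jk; rewrite ltnS leqn0 => /eqP k0; subst k.
have -> : i = 0 by lia.
have -> : j = 0 by lia.
by rewrite /= setIid.
Qed.

Lemma path_decomposition_glue (A U N W : {set V}) s1 s2 :
  U :|: N :|: W = A -> [disjoint U & W] ->
  (forall u w, u \in U -> w \in W -> ~~ (e u w || e w u)) ->
  path_decomposition U s1 -> path_decomposition W s2 ->
  path_decomposition A (map (setU N) s1 ++ map (setU N) s2).
Proof.
move=> defA UW no_edge [s1_pos s1_sub s1_cov s1_int] [s2_pos s2_sub s2_cov s2_int].
have [UA NA WA] : [/\ U \subset A, N \subset A & W \subset A].
  by rewrite -defA; split; apply/subsetP => x xin; rewrite !in_setU xin ?orbT.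
have UW0 v : v \in U -> v \in W -> False.
  by move=> vU vW; move/disjointFr: UW => /(_ v vU); rewrite vW.
split.
- by rewrite size_cat size_map addn_gt0 s1_pos.
- rewrite all_cat !all_map; apply/andP; split; apply/allP => X Xs /=;
    rewrite subUset NA /=; apply: subset_trans; [exact: (allP s1_sub) | exact: UA |
    exact: (allP s2_sub) | exact: WA].
- move=> v w vA wA vw; rewrite has_cat.
  suff [vwU | vwW] : (v \in U :|: N) && (w \in U :|: N) \/
                     (v \in W :|: N) && (w \in W :|: N).
  + by case/andP: vwU => vU wU; rewrite (covers_setU s1_pos s1_cov vU wU vw).
  + by case/andP: vwW => vW wW; rewrite (covers_setU s2_pos s2_cov vW wW vw) orbT.
  have sep x y : x \in U -> y \in W -> (x == y) || e x y || e y x -> False.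
    move=> xU yW /orP[/orP[/eqP xy|exy]|eyx]; first by subst y; exact: UW0 xU yW.
      by move: (no_edge x y xU yW); rewrite exy.
    by move: (no_edge x y xU yW); rewrite eyx orbT.
  have vw_sym : (v == w) || e v w || e w v by rewrite vw.
  have wv_sym : (w == v) || e w v || e v w.
    by case/orP: vw => [/eqP->|->]; rewrite ?eqxx ?orbT.
  move: vA wA; rewrite -defA -setUA !in_setU => /or3P[vU|vN|vW] /or3P[wU|wN|wW];
    rewrite ?vU ?vN ?vW ?wU ?wN ?wW ?orbT; auto.
  + by case: (sep v w vU wW vw_sym).
  + by case: (sep w v wU vW wv_sym).
- apply: interpolating_cat; try exact: interpolating_setU.
  move=> i k j; rewrite !size_map => i1 k1 j1.
  rewrite -map_cat !(nth_map set0 set0) ?size_cat //.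
  apply/subsetP => v; rewrite in_setI !in_setU.
  case: (v \in N) => //= /andP[v1 v2]; exfalso; apply: (UW0 v).
    by move/allP/(_ _ (mem_nth set0 i1))/subsetP: s1_sub; apply.
  by move/allP/(_ _ (mem_nth set0 k1))/subsetP: s2_sub; apply.
Qed.

Lemma path_decomposition_tree_decomposition s :
  path_decomposition [set: V] s ->
  tree_decomposition e (path_rel (size s)) (fun i => nth set0 s i).
Proof.
move=> [s_pos _ s_cov s_int]; split.
- exact: path_rel_tree.
- move=> v; have /(has_nthP set0)[i i_lt /andP[vX _]] :=
    s_cov v v (in_setT v) (in_setT v) ltac:(by rewrite eqxx).
  by exists (Ordinal i_lt).
- move=> v w vw; have /(has_nthP set0)[i i_lt vwX] :=
    s_cov v w (in_setT v) (in_setT w) ltac:(by rewrite vw orbT).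
  by exists (Ordinal i_lt).
- move=> i j k /on_path_rel_between.
  have := ltn_ord k; case/orP: (leq_total i k) => ik k_lt.
  + by rewrite (minn_idPl ik) (maxn_idPr ik) => /andP[ij jk]; apply: s_int.
  + by rewrite (minn_idPr ik) (maxn_idPl ik) setIC => /andP[kj ji]; apply: s_int.
Qed.

End PathDecompositions.

Local Open Scope ring_scope.

Section NonExpanders.

Variables (V : finType) (e : rel V).

Definition induced_edges (A : {set V}) : {set V * V} :=
  [set p | [&& e p.1 p.2, p.1 \in A & p.2 \in A]].

Lemma induced_edges_subgraph A : is_subgraph e A (induced_edges A).
Proof. by apply/forallP => p; apply/implyP; rewrite inE. Qed.

Lemma nbhd_sub (A : {set V}) E U : nbhd A E U \subset A.
Proof. by apply/subsetP => v; rewrite !inE => /andP[/andP[]]. Qed.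

Lemma mem_nbhd_induced (A U : {set V}) u x :
  U \subset A -> u \in U -> x \in A :\: U -> e u x || e x u ->
  x \in nbhd A (induced_edges A) U.
Proof.
move=> UA uU xAU ux; rewrite inE xAU /=; apply/existsP; exists u.
rewrite uU /sub_adj !inE /= (subsetP UA u uU) andbT.
by move: xAU; rewrite in_setD => /andP[_ ->]; rewrite !andbT.
Qed.

Lemma bounded_nonexpanding_set (R : realFieldType) (eps : R) b (A : {set V}) :
  bounded e b.+1 eps -> (b < #|A|)%N ->
  exists U : {set V}, [/\ U \subset A, (2 * #|U| <= #|A|)%N &
                #|nbhd A (induced_edges A) U|%:R < eps * #|U|%:R].
Proof.
move=> b_bounded A_big.
have := forallP (forallP b_bounded A) (induced_edges A).
rewrite induced_edges_subgraph A_big /= => /forallPn[U].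
by rewrite negb_imply -ltNge => /andP[/andP[UA U_half] N_small]; exists U.
Qed.

Lemma bounded_path_decomposition (R : realFieldType) (eps : R) b :
  0 < eps -> bounded e b.+1 eps -> forall A : {set V},
  exists2 s, path_decomposition e A s &
    all (fun X : {set V} => #|X|%:R <= b%:R + eps * #|A|%:R) s.
Proof.
move=> eps_pos b_bounded A; have [n A_lt] := ubnP #|A|.
elim: n A A_lt => // n IH A A_lt.
have eps_card_ge0 (X : {set V}) : 0 <= eps * #|X|%:R by rewrite mulr_ge0 // ltW.
have eps_card_le (X Y : {set V}) m : (m + #|X| <= #|Y|)%N ->
    eps * m%:R + eps * #|X|%:R <= eps * #|Y|%:R.
  by move=> XY; rewrite -mulrDr -natrD ler_pM2l // ler_nat.
have card_setU_le (N X : {set V}) : #|N :|: X|%:R <= #|N|%:R + #|X|%:R :> R.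
  by rewrite -natrD ler_nat cardsU leq_subr.
have [A_small | A_big] := leqP #|A| b.
  exists [:: A]; first exact: path_decomposition1.
  rewrite /= andbT; have := eps_card_ge0 A; rewrite -(ler_nat R) in A_small; lra.
have [U [UA U_half N_small]] := bounded_nonexpanding_set b_bounded A_big.
set N := nbhd A (induced_edges A) U in N_small; set W := A :\: (U :|: N).
have U_pos : (0 < #|U|)%N.
  by move: N_small; rewrite lt0n; apply: contraTneq => ->; rewrite mulr0 ltNge ler0n.
have UW : [disjoint U & W].
  by rewrite disjoints_subset; apply/subsetP => x xU; rewrite !inE xU.
have card_UW : (#|U| + #|W| <= #|A|)%N.
  rewrite -cardsUI (disjoint_setI0 UW) cards0 addn0 subset_leq_card //.
  by rewrite subUset UA subsetDl.
have [s1 s1_dec s1_bags] := IH U ltac:(lia).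
have [s2 s2_dec s2_bags] := IH W ltac:(lia).
exists (map (setU N) s1 ++ map (setU N) s2).
  apply: path_decomposition_glue s1_dec s2_dec.
  - apply/setP => x; rewrite !in_setU in_setD in_setU.
    case xU: (x \in U); first by rewrite (subsetP UA x xU).
    by case xN: (x \in N) => //=; rewrite (subsetP (nbhd_sub _ _ _) x xN).
  - done.
  - move=> u w uU; rewrite in_setD in_setU negb_or => /andP[/andP[wU wN] wA].
    apply/negP => uw; move/negP: wN; apply.
    by apply: mem_nbhd_induced UA uU _ uw; rewrite in_setD wU.
rewrite all_cat !all_map; apply/andP; split; apply/allP => X Xs /=;
  apply: le_trans (card_setU_le _ _) _.
- have := allP s1_bags X Xs; have := eps_card_le U A #|U| ltac:(lia); lra.
- have := allP s2_bags X Xs; have := eps_card_le W A #|U| card_UW; lra.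
Qed.

End NonExpanders.

Lemma treewidth_le_bags (R : realFieldType) (V I : finType) (e : rel V)
    (t : rel I) (X : I -> {set V}) (k : int) (c : R) :
  is_treewidth e k -> tree_decomposition e t X -> (forall i, #|X i|%:R <= c) ->
  k%:~R <= c - 1.
Proof.
move=> [_ k_min] td X_le; have [[_ _ I_pos _ _] _ _ _] := td.
have := k_min _ _ _ td; rewrite /td_width.
have [i0 ->] := bigop.eq_bigmax (fun i => #|X i|) I_pos.
rewrite -(ler_int R) => /le_trans; apply.
by rewrite rmorphB /= rmorph1 lerD2r; exact: X_le.
Qed.

Theorem theorem6 (R : realFieldType) (V : finType) (e : rel V)
  (e_sym : symmetric e) (e_irr : irreflexive e) (eps : R) (eps_pos : (0 < eps)%R)
  (k : int) (hk : is_treewidth e k) :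
  (k%:~R <= 2 * (b_eps e eps)%:R + 2 * eps * (#|V|)%:R)%R.
Proof.
set b := b_eps e eps.
have b_bounded : bounded e b.+1 eps by rewrite /b /b_eps; case: ex_minnP.
have [s s_dec s_bags] := bounded_path_decomposition eps_pos b_bounded [set: V].
have tw_le : k%:~R <= b%:R + eps * #|V|%:R - 1.
  apply: treewidth_le_bags hk (path_decomposition_tree_decomposition s_dec) _ => i.
  by rewrite -cardsT; apply: (allP s_bags); rewrite mem_nth.
have b_ge0 : 0 <= b%:R :> R by [].
have epsV_ge0 : 0 <= eps * #|V|%:R by rewrite mulr_ge0 // ltW.
lra.
Qed.
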